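(* In the setting below with $R_1=R$ and $R_2=R^c$, regard $G$ and $\Phi$ as fixed and parametrize by $b_R=b_{R_1}$ and $m_R=b_RG_R/G$ (where $G_R=G_{R_1}$). Then the log-likelihood ratio statistic $\Delta$ satisfies $\Delta=\frac{G}{\Phi}\,E(m_R,b_R)+c$, where $c$ is a constant not depending on $R$ and $$E(m_R,b_R)=m_R\,g_e\!\Big(G\tfrac{m_R}{b_R}\Big)-\tfrac{b_R}{G}B_e\!\Big(g_e\!\Big(G\tfrac{m_R}{b_R}\Big)\Big)+(1-m_R)\,g_e\!\Big(G\tfrac{1-m_R}{1-b_R}\Big)-\tfrac{1-b_R}{G}B_e\!\Big(g_e\!\Big(G\tfrac{1-m_R}{1-b_R}\Big)\Big).$$ That is, the discrepancy measure $d(m_R,b_R)$ (ignoring additive constants) satisfies $d(m_R,b_R)\frac{\Phi}{G}=E(m_R,b_R)$.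
   Context: A random variable $y$ belongs to $\mathrm{1EXP}(\eta,\phi,T,B_e,a)$ if it has density $C(y,\phi)\exp((\eta T(y)-B_e(\eta))/a(\phi))$ with $T$ measurable, $\phi>0$ known, $B_e$ strictly convex, and support independent of $\eta$; $g_e=(B_e')^{-1}$. For independent $y_i\sim\mathrm{1EXP}(\eta,\phi_i,T,B_e,a)$, $i\in S$, let $1/\phi^*=\sum_{i\in S}1/a(\phi_i)$ and $T^*(\mathbf{y})=\sum_{i\in S}(\phi^*/a(\phi_i))T(y_i)$. Setting: for $j=1,2$, $\mathbf{y}_{R_j}=(y_{R_ji}:i\in R_j)$ are mutually independent with $y_{R_ji}\sim\mathrm{1EXP}(\eta_{R_j},\phi_{R_ji},T,B_e,a)$. Let $\kappa(x,y)=(x g_e(x)-B_e(g_e(x)))/y$, $G_{R_j}=T^*(\mathbf{y}_{R_j})$, $1/\Phi_{R_j}=\sum_{i\in R_j}1/a(\phi_{R_ji})$, $1/\Phi=1/\Phi_{R_1}+1/\Phi_{R_2}$, $b_{R_1}=\frac{1/\Phi_{R_1}}{1/\Phi_{R_1}+1/\Phi_{R_2}}$, $G=b_{R_1}G_{R_1}+(1-b_{R_1})G_{R_2}$, and the log-likelihood ratio statistic for $H_0:\eta_{R_1}=\eta_{R_2}$ vs $H_1:\eta_{R_1}\ne\eta_{R_2}$ is $\Delta=\kappa(G_{R_1},\Phi_{R_1})+\kappa(G_{R_2},\Phi_{R_2})-\kappa(G,\Phi)$. *)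

From HB Require Import structures.
From mathcomp Require Import all_boot all_order all_algebra.
From mathcomp Require Import all_classical all_reals all_analysis.
Set Implicit Arguments. Unset Strict Implicit. Unset Printing Implicit Defensive.
Import Order.TTheory GRing.Theory Num.Theory.
Local Open Scope ring_scope.

Section Defs.
Variables (R : realType) (I : finType).

Definition strictly_convex (f : R -> R) : Prop :=
  forall x y t : R, x != y -> 0 < t -> t < 1 ->
    f (t * x + (1 - t) * y) < t * f x + (1 - t) * f y.

Definition kappa (ge Be : R -> R) (x y : R) : R :=
  (x * ge x - Be (ge x)) / y.

(* w i stands for a(phi_i) > 0 ; 1/Phi_S = sum_{i in S} 1/w i *)
Definition PhiS (w : I -> R) (S : {set I}) : R :=
  (\sum_(i in S) (w i)^-1)^-1.

(* T^*(y_S) = sum_{i in S} (Phi_S / a(phi_i)) T(y_i), with t i = T(y_i) *)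
Definition Tstar (w t : I -> R) (S : {set I}) : R :=
  \sum_(i in S) (PhiS w S / w i) * t i.

(* R_1 = S, R_2 = complement of S *)
Definition GR (w t : I -> R) (S : {set I}) : R := Tstar w t S.
Definition GRc (w t : I -> R) (S : {set I}) : R := Tstar w t (~: S).

Definition Phi_tot (w : I -> R) (S : {set I}) : R :=
  ((PhiS w S)^-1 + (PhiS w (~: S))^-1)^-1.

Definition bR (w : I -> R) (S : {set I}) : R :=
  (PhiS w S)^-1 / ((PhiS w S)^-1 + (PhiS w (~: S))^-1).

Definition G_tot (w t : I -> R) (S : {set I}) : R :=
  bR w S * GR w t S + (1 - bR w S) * GRc w t S.

Definition mR (w t : I -> R) (S : {set I}) : R :=
  bR w S * GR w t S / G_tot w t S.

Definition Delta (ge Be : R -> R) (w t : I -> R) (S : {set I}) : R :=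
  kappa ge Be (GR w t S) (PhiS w S) + kappa ge Be (GRc w t S) (PhiS w (~: S))
  - kappa ge Be (G_tot w t S) (Phi_tot w S).

Definition Efun (ge Be : R -> R) (G m b : R) : R :=
  m * ge (G * m / b) - b / G * Be (ge (G * m / b))
  + (1 - m) * ge (G * (1 - m) / (1 - b))
  - (1 - b) / G * Be (ge (G * (1 - m) / (1 - b))).

End Defs.

From HB Require Import structures.
From mathcomp Require Import all_boot all_order all_algebra.
From mathcomp Require Import all_classical all_reals all_analysis.
From mathcomp Require Import ring.
Import Order.TTheory GRing.Theory Num.Theory.
Local Open Scope ring_scope.

(* The identity is purely algebraic.  Writing [K x := x g_e(x) - B_e(g_e(x))],
   so that [kappa x y = K x / y], the substitution [m = b G_1 / G] turns the
   arguments of [g_e] in [E] back into [G_1] and [G_2], and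
   [G/Phi * E = (b/Phi) K G_1 + ((1-b)/Phi) K G_2 = K G_1/Phi_1 + K G_2/Phi_2].
   Moreover [G] and [Phi] are the pooled statistic and dispersion of the whole
   index set, so [c = - kappa G Phi] does not depend on the split. *)

Lemma Efun_scaled_kappa_sum (R : realType) (ge Be : R -> R) (G G1 G2 P b : R) :
  G = b * G1 + (1 - b) * G2 -> G != 0 -> b != 0 -> b != 1 ->
  G / P * Efun ge Be G (b * G1 / G) b
  = kappa ge Be G1 (P / b) + kappa ge Be G2 (P / (1 - b)).
Proof.
move=> defG G_neq0 b_neq0 b_neq1.
have b'_neq0 : 1 - b != 0 by rewrite subr_eq0 eq_sym.
have m'E : 1 - b * G1 / G = (1 - b) * G2 / G.
  by rewrite -[X in X - _ = _](divff G_neq0) -mulrBl {1}defG addrAC subrr add0r.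
have arg1 : G * (b * G1 / G) / b = G1 by field; apply/andP.
have arg2 : G * ((1 - b) * G2 / G) / (1 - b) = G2 by field; apply/andP.
have [->|P_neq0] := eqVneq P 0; first by rewrite /kappa !(mul0r, invr0, mulr0, addr0).
rewrite /Efun /kappa m'E arg1 arg2 !invf_div.
by field; apply/andP.
Qed.

Lemma sum_setT_setC {V : nmodType} {I : finType} (S : {set I}) (F : I -> V) :
  \sum_(i in [set: I]) F i = \sum_(i in S) F i + \sum_(i in ~: S) F i.
Proof. by rewrite (big_setID S) /= finset.setTI finset.setTD. Qed.

Section SplitDispersion.
Variables (R : realType) (I : finType) (w : I -> R).
Hypothesis w_gt0 : forall i, 0 < w i.

Lemma PhiS_gt0 (S : {set I}) : S != finset.set0 -> 0 < PhiS w S.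
Proof.
case/set0Pn=> x Sx; rewrite invr_gt0 (bigD1 x) //=.
by rewrite ltr_pwDl ?invr_gt0 // sumr_ge0 // => i _; rewrite invr_ge0 ltW.
Qed.

Lemma Phi_tot_setT (S : {set I}) : Phi_tot w S = PhiS w [set: I].
Proof.
by rewrite /Phi_tot /PhiS !invrK (sum_setT_setC S).
Qed.

Lemma bRE (S : {set I}) : bR w S = Phi_tot w S / PhiS w S.
Proof. by rewrite /bR /Phi_tot invrK mulrC. Qed.

Lemma Phi_tot_gt0 (S : {set I}) :
  S != finset.set0 -> ~: S != finset.set0 -> 0 < Phi_tot w S.
Proof. by move=> S0 Sc0; rewrite invr_gt0 addr_gt0 // invr_gt0 PhiS_gt0. Qed.

Lemma subr_bRE (S : {set I}) :
  S != finset.set0 -> ~: S != finset.set0 ->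
  1 - bR w S = Phi_tot w S / PhiS w (~: S).
Proof.
move=> S0 Sc0; have := Phi_tot_gt0 _ S0 Sc0.
rewrite /bR /Phi_tot invr_gt0; set p := (PhiS w S)^-1; set q := (PhiS w (~: S))^-1.
by move=> /lt0r_neq0 pq_neq0; clearbody p q; field.
Qed.

Lemma Phi_tot_div_bR (S : {set I}) :
  S != finset.set0 -> ~: S != finset.set0 -> Phi_tot w S / bR w S = PhiS w S.
Proof.
move=> S0 Sc0; have Phi_neq0 := lt0r_neq0 (Phi_tot_gt0 _ S0 Sc0).
by rewrite bRE invf_div mulrCA divff ?mulr1.
Qed.

Lemma Phi_tot_div_subr_bR (S : {set I}) :
  S != finset.set0 -> ~: S != finset.set0 ->
  Phi_tot w S / (1 - bR w S) = PhiS w (~: S).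
Proof.
move=> S0 Sc0; have Phi_neq0 := lt0r_neq0 (Phi_tot_gt0 _ S0 Sc0).
by rewrite subr_bRE // invf_div mulrCA divff ?mulr1.
Qed.

Lemma G_tot_setT (t : I -> R) (S : {set I}) :
  S != finset.set0 -> ~: S != finset.set0 ->
  G_tot w t S = Tstar w t [set: I].
Proof.
move=> S0 Sc0; have S_neq0 := lt0r_neq0 (PhiS_gt0 _ S0).
have Sc_neq0 := lt0r_neq0 (PhiS_gt0 _ Sc0).
have TstarE U : Tstar w t U = PhiS w U * \sum_(i in U) t i / w i.
  by rewrite mulr_sumr; apply: eq_bigr => i _; rewrite mulrAC mulrA.
rewrite /G_tot /GR /GRc subr_bRE // bRE !TstarE -(Phi_tot_setT S).
by rewrite !mulrA !divfK // -mulrDr (sum_setT_setC S).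
Qed.

End SplitDispersion.

Theorem theorem6p3 (R : realType) (I : finType) (Y : Type)
    (T : Y -> R) (a : R -> R) (y : I -> Y) (phi : I -> R) (Be ge : R -> R) :
  (forall i, 0 < phi i) ->
  (forall i, 0 < a (phi i)) ->
  strictly_convex Be ->
  (forall x : R, derivable Be x 1) ->
  (forall eta : R, ge (derive1 Be eta) = eta) ->
  Tstar (fun i => a (phi i)) (fun i => T (y i)) [set: I] != 0 ->
  exists c : R, forall S : {set I}, S != finset.set0 -> ~: S != finset.set0 ->
    let w := fun i => a (phi i) in
    let t := fun i => T (y i) in
    Delta ge Be w t S
    = G_tot w t S / Phi_tot w S
        * Efun ge Be (G_tot w t S) (mR w t S) (bR w S) + c.
Proof.
move=> _ w_gt0 _ _ _ G_neq0.
set w := fun i => a (phi i); set t := fun i => T (y i).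
exists (- kappa ge Be (Tstar w t [set: I]) (PhiS w [set: I])) => S S0 Sc0.
have Phi_neq0 : Phi_tot w S != 0 by apply/lt0r_neq0/Phi_tot_gt0.
have b_neq0 : bR w S != 0.
  by rewrite bRE mulf_neq0 // invr_eq0 lt0r_neq0 ?PhiS_gt0.
have b_neq1 : bR w S != 1.
  by rewrite eq_sym -subr_eq0 subr_bRE // mulf_neq0 // invr_eq0 lt0r_neq0 ?PhiS_gt0.
rewrite /mR (@Efun_scaled_kappa_sum _ _ _ _ _ (GRc w t S)) //; last first.
  by rewrite G_tot_setT.
by rewrite Phi_tot_div_bR // Phi_tot_div_subr_bR // /Delta G_tot_setT // Phi_tot_setT.
Qed.
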